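(* Let $n\ge 3$ and let $S_n$ be the star graph with vertices $a_1,\dots,a_n$ and center $a_1$. Then $$\liminf_{p\to\infty}\|M_{S_n}\|_p^p\geq \frac{1+\sqrt{n}}{2}.$$
   Context: For a finite connected graph $G=(V,E)$ with graph distance $d_G$ and $f:V\to\mathbb{R}$, $M_Gf(v)=\sup_{r\geq 0}\frac{1}{|B(v,r)|}\sum_{u\in B(v,r)}|f(u)|$, where $B(v,r)=\{u\in V: d_G(u,v)\le r\}$. For $g:V\to\mathbb{R}$, $\|g\|_p=(\sum_{v\in V}|g(v)|^p)^{1/p}$ and $\|M_G\|_p=\sup_{f\neq 0}\|M_Gf\|_p/\|f\|_p$. The star graph $S_n$ has edges exactly between $a_1$ and each $a_i$, $i\ge 2$. *)

From HB Require Import structures.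
From mathcomp Require Import all_boot all_order all_algebra.
From mathcomp Require Import all_classical all_reals all_analysis.
Set Implicit Arguments. Unset Strict Implicit. Unset Printing Implicit Defensive.
Import Order.TTheory GRing.Theory Num.Theory.
Local Open Scope ring_scope.

Section Graphs.
Variables (R : realType) (T : finType) (e : rel T).

Definition walk_len (u v : T) (k : nat) : bool :=
  [exists p : k.-tuple T, path e u p && (last u p == v)].

(* graph distance: least k with a walk of length k (for a connected graph on
   T any two vertices are joined by a walk of length < #|T|) *)
Definition gdist (u v : T) : nat := find (walk_len u v) (iota 0 #|T|).

Definition gball (v : T) (r : R) : {set T} :=
  [set u | (gdist u v)%:R <= r].

Definition maxop (f : T -> R) (v : T) : R :=
  sup [set (\sum_(u in gball v r) `|f u|) / #|gball v r|%:R
      | r in [set r : R | 0 <= r]].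

Definition lpnorm (p : R) (g : T -> R) : R :=
  powR (\sum_(v : T) powR `|g v| p) (p^-1).

Definition maxop_norm (p : R) : R :=
  sup [set lpnorm p (maxop f) / lpnorm p f
      | f in [set f : T -> R | f <> (fun=> 0)]].

End Graphs.

(* star graph S_n on vertices 'I_n (a_{i+1} <-> i); centre a_1 is vertex 0 *)
Definition star_adj (n : nat) : rel 'I_n :=
  fun i j => ((val i == 0%N) && (val j != 0%N)) || ((val j == 0%N) && (val i != 0%N)).

From mathcomp Require Import all_boot all_order all_algebra.
From mathcomp Require Import all_classical all_reals all_analysis.
From mathcomp Require Import ring lra.
Set Implicit Arguments. Unset Strict Implicit. Unset Printing Implicit Defensive.
Import Order.TTheory GRing.Theory Num.Theory numFieldTopology.Exports.
Local Open Scope ring_scope.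

(* Test f with f(centre) = b^2 and f = 1 on the n - 1 leaves.  Averaging over the
   ball of radius 0 gives M f >= b^2 at the centre; averaging over the ball of
   radius 1 = {leaf, centre} gives M f >= (1 + b^2)/2 >= b at a leaf.  Choosing
   b^p = u := 1 + sqrt n, the p-th power sums are ||M f||^p >= u^2 + (n-1) u and
   ||f||^p = u^2 + n - 1 = 2 u sqrt n, whose ratio is u/2.  This bounds
   ||M||_p^p below by (1 + sqrt n)/2 for every p > 0, hence also its liminf. *)

Section PowR.
Variable R : realType.

Lemma powRVK (p x : R) : p != 0 -> 0 <= x -> (x `^ p^-1) `^ p = x.
Proof. by move=> p0 x0; rewrite -powRrM mulVf // powRr1. Qed.

Lemma powRKV (p x : R) : p != 0 -> 0 <= x -> (x `^ p) `^ p^-1 = x.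
Proof. by move=> p0 x0; rewrite -powRrM mulfV // powRr1. Qed.

End PowR.

Section LpNorm.
Variables (R : realType) (T : finType) (p : R).
Hypothesis p_gt0 : 0 < p.

Let p_neq0 : p != 0. Proof. exact: lt0r_neq0. Qed.
Let invp_ge0 : 0 <= p^-1. Proof. by rewrite invr_ge0 ltW. Qed.

Lemma sum_powR_ge0 (P : pred T) (g : T -> R) : 0 <= \sum_(v | P v) `|g v| `^ p.
Proof. by apply: sumr_ge0 => v _; apply: powR_ge0. Qed.

Lemma abs_le_lpnorm (g : T -> R) u : `|g u| <= lpnorm p g.
Proof.
rewrite /lpnorm -[leLHS](powRKV p_neq0) //.
apply: (ge0_ler_powR invp_ge0); rewrite ?nnegrE ?powR_ge0 ?sum_powR_ge0 //.
by rewrite (bigD1 u) //= lerDl sum_powR_ge0.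
Qed.

Lemma lpnorm_le (g : T -> R) (m : R) : 0 <= m -> (forall v, `|g v| <= m) ->
  lpnorm p g <= #|T|%:R `^ p^-1 * m.
Proof.
move=> m0 gm; rewrite -[m in X in _ <= X](powRKV p_neq0) //.
rewrite -powRM ?ler0n ?powR_ge0 //.
apply: (ge0_ler_powR invp_ge0); rewrite ?nnegrE ?sum_powR_ge0 ?mulr_ge0 ?powR_ge0 ?ler0n //.
rewrite mulr_natl -sumr_const; apply: ler_sum => v _.
by apply: (ge0_ler_powR (ltW p_gt0)) (gm v); rewrite nnegrE.
Qed.

Lemma lpnorm_ratio_ge (f g : T -> R) c : 0 <= c ->
  0 < \sum_v `|f v| `^ p -> c * \sum_v `|f v| `^ p <= \sum_v `|g v| `^ p ->
  c `^ p^-1 <= lpnorm p g / lpnorm p f.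
Proof.
move=> c0 f_gt0 cfg; rewrite ler_pdivlMr ?powR_gt0 // -powRM //; last exact: ltW.
by apply: (ge0_ler_powR invp_ge0); rewrite ?nnegrE ?mulr_ge0 ?sum_powR_ge0 // ltW.
Qed.

End LpNorm.

Section MaximalOperator.
Variables (R : realType) (T : finType) (e : rel T).

Lemma walk_len0 u v : walk_len e u v 0 = (u == v).
Proof.
apply/existsP/eqP => [[t]|->]; first by rewrite tuple0 /= => /eqP.
by exists [tuple]; rewrite /= eqxx.
Qed.

Lemma walk_len1 u v : walk_len e u v 1 = e u v.
Proof.
apply/existsP/idP => [[t]|euv]; last by exists [tuple v]; rewrite /= euv eqxx.
by case: t => [[|x [|]] //= _]; rewrite andbT => /andP[eux /eqP <-].
Qed.

Lemma gdist_le0 u v : (gdist e u v <= 0)%N = (u == v).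
Proof.
have : (0 < #|T|)%N by apply/card_gt0P; exists u.
by rewrite /gdist; case: #|T| => // N _; rewrite /= walk_len0; case: (u == v).
Qed.

Lemma gdist_le1 u v : (1 < #|T|)%N -> (gdist e u v <= 1)%N = (u == v) || e u v.
Proof.
rewrite /gdist; case: #|T| => [|[|N]] // _.
by rewrite /= walk_len0 walk_len1; case: (u == v); case: (e u v).
Qed.

Lemma gball0 v : gball e v (0 : R) = [set v].
Proof. by apply/setP => u; rewrite !inE -[0 : R]/(0%:R) ler_nat gdist_le0. Qed.

Lemma gball1 v : (1 < #|T|)%N -> gball e v (1 : R) = [set u | (u == v) || e u v].
Proof.
by move=> T_gt1; apply/setP => u; rewrite !inE -[1 : R]/(1%:R) ler_nat gdist_le1.
Qed.

Lemma mean_abs_le (f : T -> R) (B : {set T}) (m : R) :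
  0 <= m -> (forall u, `|f u| <= m) ->
  (\sum_(u in B) `|f u|) / #|B|%:R <= m.
Proof.
move=> m0 fm; have [->|B_neq0] := eqVneq #|B| 0%N; first by rewrite invr0 mulr0.
rewrite ler_pdivrMr ?ltr0n ?lt0n // mulr_natr -sumr_const.
by apply: ler_sum => u _.
Qed.

Lemma maxop_le (f : T -> R) v (m : R) : 0 <= m -> (forall u, `|f u| <= m) ->
  maxop e f v <= m.
Proof.
move=> m0 fm; apply: ge_sup => [|_ [r _ <-]]; last exact: mean_abs_le.
exists ((\sum_(u in gball e v (0 : R)) `|f u|) / #|gball e v (0 : R)|%:R).
by exists 0 => //=.
Qed.

Lemma mean_gball_le_maxop (f : T -> R) v (r : R) : 0 <= r ->
  (\sum_(u in gball e v r) `|f u|) / #|gball e v r|%:R <= maxop e f v.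
Proof.
move=> r0; apply: ub_le_sup; last by exists r.
exists (\big[Num.max/0]_u `|f u|) => _ [s _ <-].
by apply: mean_abs_le => [|u]; [apply: bigmax_ge_id | apply: le_bigmax].
Qed.

Lemma abs_le_maxop (f : T -> R) v : `|f v| <= maxop e f v.
Proof.
by have := mean_gball_le_maxop f v (lexx 0); rewrite gball0 big_set1 cards1 divr1.
Qed.

Lemma maxop_ge0 (f : T -> R) v : 0 <= maxop e f v.
Proof. exact: le_trans (abs_le_maxop f v). Qed.

(* Without this bound [maxop_norm], a [sup], could be the junk value of an
   unbounded set. *)
Lemma maxop_ratio_le (p : R) (f : T -> R) : 0 < p ->
  lpnorm p (maxop e f) / lpnorm p f <= #|T|%:R `^ p^-1.
Proof.
move=> p_gt0; have [->|f_neq0] := eqVneq (lpnorm p f) 0.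
  by rewrite invr0 mulr0 powR_ge0.
have f_gt0 : 0 < lpnorm p f by rewrite lt_def f_neq0 powR_ge0.
set m := \big[Num.max/0]_u `|f u|.
have m_ge0 : 0 <= m := bigmax_ge_id _ _ _ _.
have m_le : m <= lpnorm p f.
  by apply: bigmax_le => [|u _]; [apply: powR_ge0 | apply: abs_le_lpnorm].
rewrite ler_pdivrMr //; apply: le_trans (ler_wpM2l (powR_ge0 _ _) m_le).
apply: lpnorm_le => // v; rewrite ger0_norm ?maxop_ge0 //.
by apply: maxop_le => // u; apply: le_bigmax.
Qed.

Lemma ratio_le_maxop_norm (p : R) (f : T -> R) : 0 < p -> f <> (fun=> 0) ->
  lpnorm p (maxop e f) / lpnorm p f <= maxop_norm e p.
Proof.
move=> p_gt0 f_neq0; apply: ub_le_sup; last by exists f.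
by exists (#|T|%:R `^ p^-1) => _ [g _ <-]; apply: maxop_ratio_le.
Qed.

End MaximalOperator.

Section Star.
Variables (R : realType) (n : nat).
Hypothesis n_gt0 : (0 < n)%N.

Let center : 'I_n := Ordinal n_gt0.

Lemma sum_center_leaves (A B : R) :
  \sum_(v : 'I_n) (if val v == 0%N then A else B) = A + B *+ n.-1.
Proof.
rewrite (bigD1 center) //=; congr (_ + _).
rewrite (eq_bigr (fun=> B)) => [|v]; last by rewrite -val_eqE => /negbTE ->.
by rewrite sumr_const cardC1 card_ord.
Qed.

Lemma star_gball1_leaf (i : 'I_n) : val i != 0%N ->
  gball (@star_adj n) i (1 : R) = [set i; center].
Proof.
move=> i_neq0; have n_gt1 : (1 < n)%N by apply: leq_ltn_trans (ltn_ord i); rewrite lt0n.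
apply/setP => u; rewrite gball1 ?card_ord // !inE /star_adj -val_eqE /= (negbTE i_neq0).
by rewrite andbT orbF.
Qed.

Lemma maxop_star_leaf (f : 'I_n -> R) (i : 'I_n) : val i != 0%N ->
  (`|f i| + `|f center|) / 2 <= maxop (@star_adj n) f i.
Proof.
move=> i_neq0; have := mean_gball_le_maxop (@star_adj n) f i ler01.
have i_notin : i \notin [set center] by rewrite inE -val_eqE.
by rewrite star_gball1_leaf // big_setU1 //= big_set1 cards2 -val_eqE /= i_neq0.
Qed.

Definition star_test (a : R) : 'I_n -> R := fun v => if val v == 0%N then a else 1.

Lemma maxop_star_test_ge (b : R) (v : 'I_n) : 0 <= b ->
  (if val v == 0%N then b ^+ 2 else b) <= maxop (@star_adj n) (star_test (b ^+ 2)) v.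
Proof.
move=> b_ge0; case: ifP => v0.
  have := abs_le_maxop (@star_adj n) (star_test (b ^+ 2)) v.
  by rewrite /star_test v0 ger0_norm ?sqr_ge0.
apply: le_trans (maxop_star_leaf _ (negbT v0)).
rewrite /star_test v0 /= normr1 ger0_norm ?sqr_ge0 // ler_pdivlMr //.
by have := sqr_ge0 (b - 1); nra.
Qed.

Let s := Num.sqrt (n%:R : R).
Let u := 1 + s.

Let u_gt0 : 0 < u. Proof. by rewrite ltr_pwDl ?sqrtr_ge0. Qed.

Lemma star_test_ratio_ge (p : R) : 0 < p ->
  (u / 2) `^ p^-1 <= lpnorm p (maxop (@star_adj n) (star_test (u `^ p^-1 ^+ 2)))
                     / lpnorm p (star_test (u `^ p^-1 ^+ 2)).
Proof.
move=> p_gt0; set b := u `^ p^-1.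
have b_ge0 : 0 <= b := powR_ge0 _ _.
have bp : b `^ p = u by apply: powRVK; [exact: lt0r_neq0 | exact: ltW].
have b2p : (b ^+ 2) `^ p = u ^+ 2 by rewrite !expr2 powRM // bp.
have f_sum : \sum_v `|star_test (b ^+ 2) v| `^ p = u ^+ 2 + 1 *+ n.-1.
  rewrite -sum_center_leaves; apply: eq_bigr => v _; rewrite /star_test.
  by case: ifP => _; [rewrite ger0_norm ?sqr_ge0 | rewrite normr1 powR1].
have Mf_sum :
    u ^+ 2 + u *+ n.-1 <= \sum_v `|maxop (@star_adj n) (star_test (b ^+ 2)) v| `^ p.
  rewrite -sum_center_leaves; apply: ler_sum => v _; rewrite ger0_norm ?maxop_ge0 //.
  have := ge0_ler_powR (ltW p_gt0) _ _ (maxop_star_test_ge v b_ge0).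
  by case: ifP => _; rewrite ?b2p ?bp !nnegrE ?maxop_ge0 ?sqr_ge0 //; apply.
have n1 : (n.-1)%:R = s ^+ 2 - 1.
  by rewrite sqr_sqrtr ?ler0n // -[in n%:R](prednK n_gt0) -natr1 addrK.
apply: lpnorm_ratio_ge; rewrite ?divr_ge0 ?(ltW u_gt0) // f_sum.
  by rewrite ltr_pwDl ?exprn_gt0.
suff -> : u / 2 * (u ^+ 2 + n.-1%:R) = u ^+ 2 + u *+ n.-1 by [].
by rewrite -[u *+ _]mulr_natr n1 /u; field.
Qed.

Lemma star_maxop_norm_ge (p : R) : 0 < p -> u / 2 <= maxop_norm (@star_adj n) p `^ p.
Proof.
move=> p_gt0; have c_ge0 : 0 <= u / 2 by rewrite divr_ge0 ?(ltW u_gt0).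
have test_neq0 : star_test (u `^ p^-1 ^+ 2) <> (fun=> 0).
  move=> /(congr1 (fun f => f center)); rewrite /star_test /=.
  by apply/eqP; rewrite gt_eqF // exprn_gt0 ?powR_gt0.
have bound := le_trans (star_test_ratio_ge p_gt0) (ratio_le_maxop_norm _ p_gt0 test_neq0).
rewrite -(powRVK (lt0r_neq0 p_gt0) c_ge0).
apply: (ge0_ler_powR (ltW p_gt0) _ _ bound); rewrite nnegrE ?powR_ge0 //.
exact: le_trans (powR_ge0 _ _) bound.
Qed.

End Star.

Section LiminfLowerBound.
Variables (T : choiceType) (X : filteredType T) (R : realType).
Local Open Scope ereal_scope.

Lemma limf_einf_ge (f : X -> \bar R) (F : set_system X) (A : set X) c :
  F A -> (forall x, A x -> c <= f x) -> c <= limf_einf f F.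
Proof.
move=> FA cf; rewrite limf_einfE; apply: le_ereal_sup_tmp.
exists (ereal_inf (f @` A)); first by exists A.
by apply: le_ereal_inf_tmp => _ [x Ax <-]; apply: cf.
Qed.

End LiminfLowerBound.

Theorem lemma3p4 (R : realType) (n : nat) (hn : (3 <= n)%N) :
  (((1 + Num.sqrt (n%:R : R)) / 2)%:E <=
   limf_einf (fun p : R => (powR (maxop_norm (@star_adj n) p) p)%:E)
             (pinfty_nbhs R))%E.
Proof.
apply: (@limf_einf_ge _ _ _ _ _ (fun p : R => 0 < p)).
  by exists 0; split => //; apply: real0.
by move=> p p_gt0; rewrite lee_fin; apply: star_maxop_norm_ge => //; apply: leq_trans hn.
Qed.
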